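(* Let $n\ge 1$ be an integer. For every real $x$, $$J_0(x)+2\sum_{i=1}^{\infty}(-1)^iJ_{4in}(x)=\frac{1}{n}\sum_{\ell=0}^{n-1}\cos\Big(x\cos\frac{(1+4\ell)\pi}{4n}\Big),$$ i.e. $J_0(x)-2J_{4n}(x)+2J_{8n}(x)-\dots=\frac1n\sum_{\ell=0}^{n-1}\cos\big(x\cos\frac{1+4\ell}{4n}\pi\big)$, the series converging absolutely.
   Context: $J_p$ denotes the Bessel function of the first kind of integer order $p$, $J_p(x)=\sum_{k\ge0}(-1)^k\frac{(x/2)^{p+2k}}{k!\,(k+p)!}$ for $p\ge 0$. *)

From Stdlib Require Import Reals.
From Coquelicot Require Import Coquelicot.
Open Scope R_scope.

Definition besselJ (p : nat) (x : R) : R :=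
  Series (fun k : nat =>
    (-1) ^ k * (x / 2) ^ (p + 2 * k) / (INR (Factorial.fact k) * INR (Factorial.fact (k + p)))).

(* Expand cos (x c) in its Taylor series and write (2 c)^(2m) as the binomial sum
   sum_j C(2m, j) cos ((2m - 2j) theta).  Averaging cos (2 k theta_l) over the n points
   theta_l = (1 + 4l) pi / (4n) gives (-1)^(k / 2n) when 2n divides k and 0 otherwise
   (cosines in arithmetic progression telescope), so the m-th Taylor term of the right-hand
   side is an alternating sum of the binomial coefficients C(2m, m - 2ni).  These terms form
   a double series indexed by (i, m), dominated by a product of two geometric sequences,
   whose i-th row sums to 2 (-1)^i J_(4in)(x); exchanging the two summations gives the
   identity, the row i = 0 accounting for 2 J_0(x). *)

From Stdlib Require Import Reals Lia Lra ZArith.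
From Coquelicot Require Import Coquelicot.
Open Scope R_scope.
Local Notation fact := Factorial.fact.

(** * Binomial expansion of powers of the cosine *)

(* Pascal's triangle in [R]; unlike [Binomial.C], [bin n k] vanishes for [k > n]. *)
Fixpoint bin (n k : nat) : R :=
  match n, k with
  | O, O => 1
  | O, S _ => 0
  | S _, O => 1
  | S n', S k' => bin n' k' + bin n' (S k')
  end.

Lemma bin_0 n : bin n 0 = 1.
Proof. destruct n; reflexivity. Qed.

Lemma bin_gt n k : (n < k)%nat -> bin n k = 0.
Proof.
  revert k; induction n as [|n IH]; intros [|k] Hk; simpl; try lia; try reflexivity.
  rewrite !IH by lia; ring.
Qed.

Lemma bin_fact n k : (k <= n)%nat ->
  bin n k = INR (fact n) / (INR (fact k) * INR (fact (n - k))).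
Proof.
  revert k; induction n as [|n IH]; intros k Hk.
  - replace k with 0%nat by lia; simpl; field.
  - destruct k as [|k].
    + rewrite bin_0, Nat.sub_0_r; simpl (fact 0); simpl (INR 1).
      field; apply INR_fact_neq_0.
    + simpl bin.
      destruct (Nat.eq_dec k n) as [->|Hkn].
      * rewrite (bin_gt n (S n)), IH, !Nat.sub_diag by lia.
        rewrite (fact_simpl n), mult_INR; simpl (fact 0); simpl (INR 1).
        field; split; [apply INR_fact_neq_0 | apply not_0_INR; lia].
      * rewrite !IH by lia.
        replace (n - k)%nat with (S (n - S k)) by lia.
        replace (S n - S k)%nat with (S (n - S k)) by lia.
        rewrite !fact_simpl, !mult_INR, !S_INR, minus_INR, S_INR by lia.
        assert (INR (fact k) <> 0) by apply INR_fact_neq_0.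
        assert (INR (fact (n - S k)) <> 0) by apply INR_fact_neq_0.
        assert (INR n - (INR k + 1) + 1 <> 0)
          by (rewrite <- S_INR, <- minus_INR, <- S_INR by lia; apply not_0_INR; lia).
        assert (INR k + 1 <> 0) by (rewrite <- S_INR; apply not_0_INR; lia).
        field; auto.
Qed.

Lemma bin_sym n k : (k <= n)%nat -> bin n (n - k) = bin n k.
Proof.
  intros Hk; rewrite !bin_fact by lia.
  replace (n - (n - k))%nat with k by lia; f_equal; ring.
Qed.

Lemma sum_bin_succ N (g : nat -> R) :
  sum_f_R0 (fun j => bin (S N) j * g j) (S N) =
  sum_f_R0 (fun j => bin N j * g j) N + sum_f_R0 (fun j => bin N j * g (S j)) N.
Proof.
  assert (Hlow : sum_f_R0 (fun j => bin N j * g j) N =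
    g 0%nat + sum_f_R0 (fun i => bin N (S i) * g (S i)) N).
  { assert (H := decomp_sum (fun j => bin N j * g j) (S N) ltac:(lia)).
    rewrite tech5, bin_gt, bin_0 in H by lia; simpl pred in H; lra. }
  rewrite decomp_sum, Nat.pred_succ, bin_0, Hlow by lia.
  rewrite Rmult_1_l, Rplus_assoc, <- sum_plus; f_equal; apply sum_eq; intros i _; simpl; ring.
Qed.

Lemma cos_pow_bin N t :
  2 ^ N * cos t ^ N = sum_f_R0 (fun j => bin N j * cos ((INR N - 2 * INR j) * t)) N.
Proof.
  induction N as [|N IH].
  - simpl; rewrite Rmult_0_r, Rminus_0_r, Rmult_0_l, cos_0; ring.
  - rewrite sum_bin_succ.
    transitivity (2 * cos t * (2 ^ N * cos t ^ N)); [simpl; ring|].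
    rewrite IH, scal_sum, <- sum_plus; apply sum_eq; intros j _.
    rewrite !S_INR.
    replace ((INR N + 1 - 2 * INR j) * t) with ((INR N - 2 * INR j) * t + t) by ring.
    replace ((INR N + 1 - 2 * (INR j + 1)) * t) with ((INR N - 2 * INR j) * t - t) by ring.
    rewrite cos_plus, cos_minus; ring.
Qed.

Lemma sum_f_R0_fold m (f : nat -> R) :
  sum_f_R0 f (2 * m) = sum_f_R0 (fun k => f (m - k)%nat + f (m + k)%nat) m - f m.
Proof.
  revert f; induction m as [|m IH]; intros f; [simpl; ring|].
  replace (2 * S m)%nat with (S (S (2 * m))) by lia.
  rewrite tech5, decomp_sum, Nat.pred_succ, (IH (fun j => f (S j))), tech5 by lia.
  replace (S m - S m)%nat with 0%nat by lia.
  replace (S m + S m)%nat with (S (S (2 * m))) by lia.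
  rewrite (sum_eq (fun k => f (S m - k)%nat + f (S m + k)%nat)
             (fun k => f (S (m - k)) + f (S (m + k)))) by (intros i Hi; f_equal; f_equal; lia).
  ring.
Qed.

Lemma cos_even_pow_bin m t :
  4 ^ m * cos t ^ (2 * m) =
  2 * sum_f_R0 (fun k => bin (2 * m) (m - k) * cos (2 * INR k * t)) m - bin (2 * m) m.
Proof.
  replace (4 ^ m) with (2 ^ (2 * m)) by (rewrite pow_mult; f_equal; ring).
  rewrite cos_pow_bin, sum_f_R0_fold.
  replace (INR (2 * m) - 2 * INR m) with 0 by (rewrite mult_INR; simpl; ring).
  rewrite Rmult_0_l, cos_0, Rmult_1_r, scal_sum.
  f_equal; apply sum_eq; intros k Hk.
  rewrite <- (bin_sym (2 * m) (m - k)) by lia.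
  replace (2 * m - (m - k))%nat with (m + k)%nat by lia.
  rewrite mult_INR, minus_INR, plus_INR by lia; simpl (INR 2).
  replace (((1 + 1) * INR m - 2 * (INR m - INR k)) * t) with (2 * INR k * t) by ring.
  replace (((1 + 1) * INR m - 2 * (INR m + INR k)) * t) with (- (2 * INR k * t)) by ring.
  rewrite cos_neg; ring.
Qed.

(** * Averages over the nodes [theta n l] *)

Definition theta (n l : nat) : R := (1 + 4 * INR l) * PI / (4 * INR n).

Definition dvd_sign (d k : nat) : R :=
  if Nat.eqb (k mod d) 0 then (-1) ^ (k / d) else 0.

Lemma dvd_sign_mul_l c d k : c <> 0%nat -> dvd_sign (c * d) (c * k) = dvd_sign d k.
Proof.
  intros Hc; unfold dvd_sign.
  rewrite Nat.Div0.mul_mod_distr_l, Nat.Div0.div_mul_cancel_l by exact Hc.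
  destruct (Nat.eqb_spec (c * (k mod d)) 0), (Nat.eqb_spec (k mod d) 0);
    reflexivity || lia.
Qed.

Lemma cos_INR_mult_PI i : cos (INR i * PI) = (-1) ^ i.
Proof.
  induction i as [|i IH]; [simpl; rewrite Rmult_0_l; apply cos_0|].
  rewrite S_INR, Rmult_plus_distr_r, Rmult_1_l, neg_cos, IH; simpl; ring.
Qed.

Lemma sin_INR_mult_PI i : sin (INR i * PI) = 0.
Proof. apply sin_eq_0_1; exists (Z.of_nat i); rewrite <- INR_IZR_INZ; reflexivity. Qed.

Lemma cos_INR_mult_PI2 q : cos (INR q * PI / 2) = dvd_sign 2 q.
Proof.
  destruct (Nat.Even_or_Odd q) as [[i ->]|[i ->]]; unfold dvd_sign.
  - rewrite Nat.mul_comm, Nat.Div0.mod_mul, Nat.div_mul by lia; simpl Nat.eqb.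
    rewrite mult_INR; simpl (INR 2).
    replace (INR i * (1 + 1) * PI / 2) with (INR i * PI) by field.
    apply cos_INR_mult_PI.
  - replace ((2 * i + 1) mod 2)%nat with 1%nat
      by (apply (Nat.mod_unique _ _ i); lia); simpl Nat.eqb.
    rewrite plus_INR, mult_INR; simpl (INR 2); simpl (INR 1).
    replace (((1 + 1) * INR i + 1) * PI / 2) with (INR i * PI + PI / 2) by field.
    rewrite cos_plus, cos_PI2, sin_INR_mult_PI; ring.
Qed.

Lemma sin_mult_PI_div_neq0 k n : n <> 0%nat -> (k mod n <> 0)%nat ->
  sin (INR k * PI / INR n) <> 0.
Proof.
  intros Hn0 Hk Hsin; apply sin_eq_0_0 in Hsin as [z Hz].
  assert (Hn : INR n <> 0) by (apply not_0_INR; exact Hn0).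
  assert (E : INR k = IZR z * INR n).
  { apply (Rmult_eq_reg_r PI); [|apply PI_neq0].
    rewrite Rmult_assoc, (Rmult_comm (INR n)), <- Rmult_assoc, <- Hz; field; exact Hn. }
  rewrite !INR_IZR_INZ, <- mult_IZR in E; apply eq_IZR in E.
  apply Hk, Nat2Z.inj; rewrite Nat2Z.inj_mod, E, Z.mod_mul; [reflexivity | lia].
Qed.

(* Telescopes by [2 sin h cos (a + 2lh) = sin (a + (2l+1)h) - sin (a + (2l-1)h)]. *)
Lemma sum_cos_arith a h N :
  2 * sin h * sum_f_R0 (fun l => cos (a + INR l * (2 * h))) N =
  sin (a + (2 * INR N + 1) * h) - sin (a - h).
Proof.
  induction N as [|N IH].
  - simpl; replace (a + 0 * (2 * h)) with a by ring.
    replace (a + (2 * 0 + 1) * h) with (a + h) by ring.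
    rewrite sin_plus, sin_minus; ring.
  - rewrite tech5, Rmult_plus_distr_l, IH, S_INR.
    set (b := a + (INR N + 1) * (2 * h)).
    replace (a + (2 * INR N + 1) * h) with (b - h) by (unfold b; ring).
    replace (a + (2 * (INR N + 1) + 1) * h) with (b + h) by (unfold b; ring).
    rewrite sin_plus, sin_minus; ring.
Qed.

Lemma sum_cos_theta n k : (1 <= n)%nat ->
  sum_f_R0 (fun l => cos (2 * INR k * theta n l)) (n - 1) = INR n * dvd_sign (2 * n) k.
Proof.
  intros Hn; assert (Hn0 : 0 < INR n) by (apply lt_0_INR; lia).
  set (a := INR k * PI / (2 * INR n)); set (h := INR k * PI / INR n).
  rewrite (sum_eq _ (fun l => cos (a + INR l * (2 * h))))
    by (intros l _; f_equal; unfold theta, a, h; field; lra).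
  destruct (Nat.eq_dec (k mod n) 0) as [Hdvd|Hndvd].
  - apply Nat.Div0.mod_divides in Hdvd as [q ->].
    rewrite (sum_eq _ (fun _ => cos a)).
    2:{ intros l _; unfold h; rewrite mult_INR.
        replace (INR l * (2 * (INR n * INR q * PI / INR n))) with (2 * INR (l * q) * PI)
          by (rewrite mult_INR; field; lra).
        apply cos_period. }
    rewrite sum_cte, Nat.sub_1_r, Nat.succ_pred_pos, Rmult_comm, (Nat.mul_comm 2 n),
      dvd_sign_mul_l by lia.
    f_equal; unfold a; rewrite <- cos_INR_mult_PI2, mult_INR; f_equal; field; lra.
  - assert (Hsum : sum_f_R0 (fun l => cos (a + INR l * (2 * h))) (n - 1) = 0).
    { apply (Rmult_eq_reg_l (2 * sin h)); [|apply Rmult_integral_contrapositive;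
        split; [lra | apply sin_mult_PI_div_neq0; lia]].
      rewrite sum_cos_arith, Rmult_0_r.
      replace (a + (2 * INR (n - 1) + 1) * h) with (a - h + 2 * INR k * PI)
        by (rewrite minus_INR by lia; unfold a, h; simpl INR; field; lra).
      rewrite sin_period; ring. }
    rewrite Hsum; unfold dvd_sign.
    destruct (Nat.eqb_spec (k mod (2 * n)) 0) as [H2n|]; [|ring].
    apply Nat.Div0.mod_divides in H2n as [c ->].
    exfalso; apply Hndvd; rewrite (Nat.mul_comm 2 n), <- Nat.mul_assoc, Nat.mul_comm.
    apply Nat.Div0.mod_mul.
Qed.

Lemma sum_f_R0_swap (f : nat -> nat -> R) N M :
  sum_f_R0 (fun l => sum_f_R0 (fun k => f l k) M) N =
  sum_f_R0 (fun k => sum_f_R0 (fun l => f l k) N) M.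
Proof.
  induction N as [|N IH]; [reflexivity|].
  rewrite tech5, IH, <- sum_plus; reflexivity.
Qed.

Lemma sum_dvd_sign d (g : nat -> R) M : d <> 0%nat ->
  sum_f_R0 (fun k => g k * dvd_sign d k) M = sum_f_R0 (fun i => (-1) ^ i * g (d * i)%nat) (M / d).
Proof.
  intros Hd; induction M as [|M IH].
  - unfold dvd_sign; simpl; rewrite Nat.Div0.mod_0_l, Nat.Div0.div_0_l; simpl.
    rewrite Nat.mul_0_r; ring.
  - rewrite tech5, IH; unfold dvd_sign.
    pose proof (Nat.div_mod_eq M d) as HM; pose proof (Nat.mod_upper_bound M d Hd).
    destruct (Nat.eq_dec (S (M mod d)) d) as [Hlast|Hlast].
    + assert (Hmod : (S M mod d = 0)%nat)
        by (symmetry; apply (Nat.mod_unique _ _ (S (M / d))); lia).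
      assert (Hdiv : (S M / d = S (M / d))%nat)
        by (symmetry; apply (Nat.div_unique _ _ _ 0); lia).
      rewrite Hmod, Hdiv, tech5; simpl Nat.eqb.
      replace (d * S (M / d))%nat with (S M) by lia; ring.
    + assert (Hmod : (S M mod d = S (M mod d))%nat)
        by (symmetry; apply (Nat.mod_unique _ _ (M / d)); lia).
      assert (Hdiv : (S M / d = M / d)%nat)
        by (symmetry; apply (Nat.div_unique _ _ _ (S (M mod d))); lia).
      rewrite Hmod, Hdiv; simpl Nat.eqb; cbv iota; ring.
Qed.

Lemma avg_cos_even_pow_theta n m : (1 <= n)%nat ->
  / INR n * sum_f_R0 (fun l => 4 ^ m * cos (theta n l) ^ (2 * m)) (n - 1) =
  2 * sum_f_R0 (fun k => bin (2 * m) (m - k) * dvd_sign (2 * n) k) m - bin (2 * m) m.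
Proof.
  intros Hn; assert (Hn0 : 0 < INR n) by (apply lt_0_INR; lia).
  rewrite (sum_eq _ (fun l =>
    sum_f_R0 (fun k => bin (2 * m) (m - k) * cos (2 * INR k * theta n l)) m * 2 - bin (2 * m) m))
    by (intros; rewrite cos_even_pow_bin; ring).
  rewrite minus_sum, sum_cte, <- scal_sum, sum_f_R0_swap, Nat.sub_1_r, Nat.succ_pred_pos by lia.
  rewrite (sum_eq _ (fun k => bin (2 * m) (m - k) * dvd_sign (2 * n) k * INR n)).
  2:{ intros k _.
      rewrite (sum_eq _ (fun l => cos (2 * INR k * theta n l) * bin (2 * m) (m - k)))
        by (intros; ring).
      rewrite <- scal_sum, <- Nat.sub_1_r, sum_cos_theta by exact Hn; ring. }
  rewrite <- scal_sum; field; lra.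
Qed.

Lemma is_series_geom_scal K q : 0 <= q < 1 -> is_series (fun i => K * q ^ i) (K / (1 - q)).
Proof.
  intros Hq; apply (is_series_scal_l K (fun i => q ^ i)), is_series_geom.
  rewrite Rabs_pos_eq; lra.
Qed.

Lemma ex_series_geom_bound (f : nat -> R) K q : 0 <= q < 1 ->
  (forall i, Rabs (f i) <= K * q ^ i) ->
  ex_series (fun i => Rabs (f i)) /\ Rabs (Series f) <= K / (1 - q).
Proof.
  intros Hq Hf.
  assert (Habs : ex_series (fun i => Rabs (f i))).
  { apply (@ex_series_le R_AbsRing R_CompleteNormedModule _ (fun i => K * q ^ i)).
    - intros i; change (Rabs (Rabs (f i)) <= K * q ^ i); rewrite Rabs_Rabsolu; auto.
    - eexists; apply is_series_geom_scal; auto. }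
  split; [exact Habs|].
  eapply Rle_trans; [apply Series_Rabs; exact Habs|].
  rewrite <- (is_series_unique _ _ (is_series_geom_scal K q Hq)).
  apply Series_le; [intros i; split; [apply Rabs_pos | auto]|].
  eexists; apply is_series_geom_scal; auto.
Qed.

Lemma is_series_finite_support (f : nat -> R) M :
  (forall i, (M < i)%nat -> f i = 0) -> is_series f (sum_f_R0 f M).
Proof.
  intros Hf; apply is_series_Reals; intros eps He; exists M; intros k Hk.
  replace (sum_f_R0 f k) with (sum_f_R0 f M); [unfold R_dist; rewrite Rminus_diag, Rabs_R0; auto|].
  induction Hk as [|k Hk IH]; [reflexivity|].
  rewrite tech5, <- IH, Hf by lia; ring.
Qed.

Lemma is_series_sum_f_R0 (f : nat -> nat -> R) (g : nat -> R) N :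
  (forall l, is_series (f l) (g l)) ->
  is_series (fun m => sum_f_R0 (fun l => f l m) N) (sum_f_R0 g N).
Proof.
  intros Hf; induction N as [|N IH]; [apply Hf|].
  apply (is_series_plus _ _ _ _ IH (Hf (S N))).
Qed.

Lemma is_series_of_geom_error (f : nat -> R) T K q : 0 <= q < 1 ->
  (forall N, Rabs (sum_f_R0 f N - T) <= K * q ^ N) -> is_series f T.
Proof.
  intros Hq Herr.
  assert (Hgeom : is_lim_seq (fun N => K * q ^ N) 0).
  { replace (Finite 0) with (Rbar_mult K 0) by (simpl; f_equal; ring).
    apply is_lim_seq_scal_l, is_lim_seq_geom; rewrite Rabs_pos_eq; lra. }
  change (is_lim_seq (sum_n f) T).
  apply (is_lim_seq_le_le (fun N => T - K * q ^ N) _ (fun N => T + K * q ^ N)).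
  - intros N; rewrite sum_n_Reals; apply Rabs_le_between', Herr.
  - replace (Finite T) with (Rbar_minus T 0) by (simpl; f_equal; ring).
    apply (is_lim_seq_minus' _ _ T 0 (is_lim_seq_const T) Hgeom).
  - replace (Finite T) with (Rbar_plus T 0) by (simpl; f_equal; ring).
    apply (is_lim_seq_plus' _ _ T 0 (is_lim_seq_const T) Hgeom).
Qed.

Lemma is_series_swap (u : nat -> nat -> R) (C a b T : R) :
  0 <= a < 1 -> 0 <= b < 1 -> (forall i m, Rabs (u i m) <= C * a ^ i * b ^ m) ->
  is_series (fun m => Series (fun i => u i m)) T -> is_series (fun i => Series (u i)) T.
Proof.
  intros Ha Hb Hu HT.
  assert (Htail_bound : forall N m,
    ex_series (fun i => Rabs (u (N + i)%nat m)) /\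
    Rabs (Series (fun i => u (N + i)%nat m)) <= C * a ^ N * b ^ m / (1 - a)).
  { intros N m; apply ex_series_geom_bound; [exact Ha|]; intros i.
    replace (C * a ^ N * b ^ m * a ^ i) with (C * a ^ (N + i) * b ^ m) by (rewrite pow_add; ring).
    apply Hu. }
  assert (Hcol : forall m, ex_series (fun i => u i m))
    by (intros m; apply ex_series_Rabs, (Htail_bound 0%nat m)).
  assert (Hrow : forall i, ex_series (u i)).
  { intros i; apply ex_series_Rabs, (ex_series_geom_bound _ (C * a ^ i) b Hb), Hu. }
  apply (is_series_of_geom_error _ T (C * a / (1 - a) / (1 - b)) a Ha); intros N.
  set (tail := fun m => Series (fun i => u (S N + i)%nat m)).
  assert (Htail : is_series tail (T - sum_f_R0 (fun i => Series (u i)) N)).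
  { apply (is_series_ext (fun m => Series (fun i => u i m) - sum_f_R0 (fun i => u i m) N)).
    - intros m; unfold tail; rewrite (Series_incr_n _ (S N)) by (lia || apply Hcol).
      simpl pred; lra.
    - apply (is_series_minus _ _ _ _ HT), is_series_sum_f_R0.
      intros i; apply Series_correct, Hrow. }
  rewrite Rabs_minus_sym, <- (is_series_unique _ _ Htail).
  replace (C * a / (1 - a) / (1 - b) * a ^ N) with (C * a ^ S N / (1 - a) / (1 - b))
    by (simpl; field; lra).
  apply ex_series_geom_bound; [exact Hb|]; intros m.
  replace (C * a ^ S N / (1 - a) * b ^ m) with (C * a ^ S N * b ^ m / (1 - a)) by (field; lra).
  apply Htail_bound.
Qed.

Lemma pow_le_pow_of_le_1 q i m : 0 <= q <= 1 -> (i <= m)%nat -> q ^ m <= q ^ i.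
Proof.
  intros Hq Him; induction Him as [|m Him IH]; [lra|].
  simpl; assert (0 <= q ^ m) by (apply pow_le; lra); nra.
Qed.

Lemma pow_div_fact_le_exp z m : 0 <= z -> z ^ m / INR (fact m) <= exp z.
Proof.
  intros Hz; eapply Rle_trans; [|apply (exp_ge_taylor z m Hz)].
  destruct m as [|m]; [simpl; lra|].
  rewrite tech5; assert (0 <= sum_f_R0 (fun k => z ^ k / INR (fact k)) m); [|lra].
  apply cond_pos_sum; intros k.
  apply Rdiv_le_0_compat; [apply pow_le; exact Hz | apply INR_fact_lt_0].
Qed.

Lemma bessel_term_bound x m a b : (m <= b)%nat ->
  Rabs ((-1) ^ m * (x / 2) ^ (2 * m) / (INR (fact a) * INR (fact b)))
  <= exp (x²) * (/ 4) ^ m.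
Proof.
  intros Hmb.
  assert (Ha : 1 <= INR (fact a)) by (apply (le_INR 1), Factorial.lt_O_fact).
  assert (Hb : INR (fact m) <= INR (fact b)) by (apply le_INR, Factorial.fact_le, Hmb).
  assert (Hm := INR_fact_lt_0 m).
  assert (Hx : 0 <= (x²) ^ m) by (apply pow_le, Rle_0_sqr).
  replace (Rabs _) with ((x²) ^ m / (INR (fact a) * INR (fact b)) * (/ 4) ^ m).
  2:{ assert (Hden : 0 < INR (fact a) * INR (fact b))
        by (apply Rmult_lt_0_compat; apply INR_fact_lt_0).
      rewrite Rabs_div, Rabs_mult, pow_1_abs, (Rabs_pos_eq (_ * _)) by lra.
      rewrite pow_mult, Rabs_pos_eq by (apply pow_le, pow2_ge_0).
      replace (x²) with ((x / 2) ^ 2 * 4) by (unfold Rsqr; field).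
      rewrite Rpow_mult_distr, pow_inv, Rmult_1_l.
      assert (4 ^ m <> 0) by (apply pow_nonzero; lra).
      field; split; lra. }
  apply Rmult_le_compat_r; [apply pow_le; lra|].
  apply Rle_trans with ((x²) ^ m / INR (fact m)); [|apply pow_div_fact_le_exp, Rle_0_sqr].
  apply Rmult_le_compat_l; [exact Hx|]; apply Rinv_le_contravar; nra.
Qed.

Lemma is_series_cos z : is_series (fun m => cos_n m * (z²) ^ m) (cos z).
Proof.
  unfold cos; destruct (exist_cos (z²)) as [l Hl]; apply is_series_Reals, Hl.
Qed.

(** * The double series *)

Definition cos_term_half (x : R) (m : nat) : R :=
  (-1) ^ m * (x / 2) ^ (2 * m) / INR (fact (2 * m)).

Lemma cos_n_term x c m : cos_n m * ((x * c)²) ^ m = 4 ^ m * c ^ (2 * m) * cos_term_half x m.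
Proof.
  unfold cos_term_half, cos_n.
  replace ((x * c)²) with ((x / 2) ^ 2 * 4 * c ^ 2) by (unfold Rsqr; field).
  rewrite !Rpow_mult_distr, !pow_mult; unfold Rdiv; ring.
Qed.

Lemma besselJ0_term x m :
  (-1) ^ m * (x / 2) ^ (0 + 2 * m) / (INR (fact m) * INR (fact (m + 0)))
  = bin (2 * m) m * cos_term_half x m.
Proof.
  unfold cos_term_half; rewrite bin_fact, Nat.add_0_r, Nat.add_0_l by lia.
  replace (2 * m - m)%nat with m by lia.
  assert (INR (fact m) <> 0) by apply INR_fact_neq_0.
  assert (INR (fact (2 * m)) <> 0) by apply INR_fact_neq_0.
  field; auto.
Qed.

(* Substituting [m = 2ni + k] turns row [i] into [2 (-1)^i J_(4in)(x)]; column [m] is the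
   [m]-th Taylor term of [J_0(x)] plus that of the average of [cos (x cos theta)]. *)
Definition bessel_grid (n : nat) (x : R) (i m : nat) : R :=
  if Nat.leb (2 * n * i) m then
    2 * (-1) ^ i * ((-1) ^ m * (x / 2) ^ (2 * m) /
                    (INR (fact (m - 2 * n * i)) * INR (fact (m + 2 * n * i))))
  else 0.

Lemma bessel_grid_bin n x i m : (2 * n * i <= m)%nat ->
  bessel_grid n x i m = (-1) ^ i * bin (2 * m) (m - 2 * n * i) * (2 * cos_term_half x m).
Proof.
  intros Him; unfold bessel_grid, cos_term_half.
  destruct (Nat.leb_spec (2 * n * i) m); [|lia].
  rewrite bin_fact by lia; replace (2 * m - (m - 2 * n * i))%nat with (m + 2 * n * i)%nat by lia.
  assert (INR (fact (m - 2 * n * i)) <> 0) by apply INR_fact_neq_0.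
  assert (INR (fact (m + 2 * n * i)) <> 0) by apply INR_fact_neq_0.
  assert (INR (fact (2 * m)) <> 0) by apply INR_fact_neq_0.
  field; auto.
Qed.

Lemma bessel_grid_bound n x i m : (1 <= n)%nat ->
  Rabs (bessel_grid n x i m) <= 2 * exp (x²) * (/ 2) ^ i * (/ 2) ^ m.
Proof.
  intros Hn; assert (He := exp_pos (x²)).
  assert (Hi := pow_le (/ 2) i ltac:(lra)); assert (Hm := pow_le (/ 2) m ltac:(lra)).
  unfold bessel_grid; destruct (Nat.leb_spec (2 * n * i) m) as [Him|].
  2:{ rewrite Rabs_R0; repeat apply Rmult_le_pos; lra. }
  rewrite Rabs_mult, Rabs_mult, pow_1_abs, Rabs_pos_eq by lra.
  assert (Hquarter : (/ 4) ^ m <= (/ 2) ^ i * (/ 2) ^ m).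
  { replace (/ 4) with (/ 2 * / 2) by field; rewrite Rpow_mult_distr.
    apply Rmult_le_compat_r; [exact Hm|]; apply pow_le_pow_of_le_1; [lra | nia]. }
  assert (Hterm := bessel_term_bound x m (m - 2 * n * i) (m + 2 * n * i) ltac:(lia)).
  apply Rle_trans with (2 * (exp (x²) * (/ 4) ^ m)); [lra|].
  assert (exp (x²) * (/ 4) ^ m <= exp (x²) * ((/ 2) ^ i * (/ 2) ^ m))
    by (apply Rmult_le_compat_l; lra).
  lra.
Qed.

Lemma bessel_grid_row n x i :
  Series (bessel_grid n x i) = 2 * (-1) ^ i * besselJ (4 * i * n) x.
Proof.
  rewrite (Series_incr_n_aux _ (2 * n * i)).
  2:{ intros k Hk; unfold bessel_grid; destruct (Nat.leb_spec (2 * n * i) k); [lia | reflexivity]. }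
  unfold besselJ; rewrite <- Series_scal_l; apply Series_ext; intros k; unfold bessel_grid.
  destruct (Nat.leb_spec (2 * n * i) (2 * n * i + k)); [|lia].
  replace (2 * n * i + k - 2 * n * i)%nat with k by lia.
  replace (2 * n * i + k + 2 * n * i)%nat with (k + 4 * i * n)%nat by lia.
  replace (2 * (2 * n * i + k))%nat with (4 * i * n + 2 * k)%nat by lia.
  replace (2 * n * i + k)%nat with (2 * (n * i) + k)%nat by lia.
  rewrite pow_add, pow_mult; replace ((-1) ^ 2) with 1 by ring; rewrite pow1.
  unfold Rdiv; ring.
Qed.

Lemma bessel_grid_col n x m : (1 <= n)%nat ->
  Series (fun i => bessel_grid n x i m) =
  (-1) ^ m * (x / 2) ^ (0 + 2 * m) / (INR (fact m) * INR (fact (m + 0))) +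
  / INR n * sum_f_R0 (fun l => cos_n m * ((x * cos (theta n l))²) ^ m) (n - 1).
Proof.
  intros Hn.
  assert (Hsupp : forall i, (m / (2 * n) < i)%nat -> bessel_grid n x i m = 0).
  { intros i Hi; unfold bessel_grid.
    destruct (Nat.leb_spec (2 * n * i) m) as [Him|]; [|reflexivity].
    apply (Nat.div_le_lower_bound m (2 * n) i) in Him; lia. }
  rewrite (is_series_unique _ _ (is_series_finite_support _ _ Hsupp)).
  rewrite (sum_eq _ (fun i => (-1) ^ i * bin (2 * m) (m - 2 * n * i) * (2 * cos_term_half x m))).
  2:{ intros i Hi; apply bessel_grid_bin.
      pose proof (Nat.Div0.mul_div_le m (2 * n)); nia. }
  pose proof (sum_dvd_sign (2 * n) (fun k => bin (2 * m) (m - k)) m) as Hsparse.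
  cbv beta in Hsparse.
  rewrite <- scal_sum, <- Hsparse, besselJ0_term by lia.
  rewrite (sum_eq (fun l => cos_n m * ((x * cos (theta n l))²) ^ m)
                  (fun l => 4 ^ m * cos (theta n l) ^ (2 * m) * cos_term_half x m))
    by (intros; apply cos_n_term).
  rewrite <- scal_sum, (Rmult_comm (cos_term_half x m)), <- Rmult_assoc.
  rewrite avg_cos_even_pow_theta by exact Hn; ring.
Qed.

Lemma is_series_besselJ0 x :
  is_series (fun m => (-1) ^ m * (x / 2) ^ (0 + 2 * m) / (INR (fact m) * INR (fact (m + 0))))
    (besselJ 0 x).
Proof.
  apply Series_correct, ex_series_Rabs, (ex_series_geom_bound _ (exp (x²)) (/ 4)); [lra|].
  intros m; apply bessel_term_bound; lia.
Qed.

Lemma is_series_besselJ_theta n x : (1 <= n)%nat ->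
  is_series (fun i => 2 * (-1) ^ i * besselJ (4 * i * n) x)
    (besselJ 0 x + / INR n * sum_f_R0 (fun l => cos (x * cos (theta n l))) (n - 1)).
Proof.
  intros Hn.
  apply (is_series_ext (fun i => Series (bessel_grid n x i))); [intros; apply bessel_grid_row|].
  apply (is_series_swap _ (2 * exp (x²)) (/ 2) (/ 2)); [lra | lra | |].
  { intros i m; apply bessel_grid_bound, Hn. }
  apply (is_series_ext (fun m =>
    (-1) ^ m * (x / 2) ^ (0 + 2 * m) / (INR (fact m) * INR (fact (m + 0))) +
    / INR n * sum_f_R0 (fun l => cos_n m * ((x * cos (theta n l))²) ^ m) (n - 1))).
  { intros m; symmetry; apply bessel_grid_col, Hn. }
  apply (is_series_plus _ _ _ _ (is_series_besselJ0 x)).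
  apply (is_series_scal_l (/ INR n) _ (sum_f_R0 (fun l => cos (x * cos (theta n l))) (n - 1))).
  apply (is_series_sum_f_R0 (fun l m => cos_n m * ((x * cos (theta n l))²) ^ m)).
  intros l; apply is_series_cos.
Qed.

Lemma besselJ_4in_bound n x i : (1 <= n)%nat ->
  Rabs (besselJ (4 * i * n) x) <= 2 * exp (x²) * (/ 2) ^ i.
Proof.
  intros Hn.
  destruct (ex_series_geom_bound (bessel_grid n x i) (2 * exp (x²) * (/ 2) ^ i) (/ 2))
    as [_ Hrow]; [lra | intros m; apply bessel_grid_bound, Hn |].
  rewrite bessel_grid_row, Rabs_mult, Rabs_mult, pow_1_abs, Rabs_pos_eq in Hrow by lra.
  replace (2 * exp (x²) * (/ 2) ^ i / (1 - / 2)) with (2 * (2 * exp (x²) * (/ 2) ^ i))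
    in Hrow by field.
  lra.
Qed.

Theorem mainTheorem11 (n : nat) (hn : (1 <= n)%nat) (x : R) :
  ex_series (fun i : nat => Rabs ((-1) ^ (S i) * besselJ (4 * S i * n) x)) /\
  exists s : R,
    is_series (fun i : nat => (-1) ^ (S i) * besselJ (4 * S i * n) x) s /\
    besselJ 0 x + 2 * s =
      / INR n * sum_f_R0 (fun l : nat =>
                  cos (x * cos ((1 + 4 * INR l) * PI / (4 * INR n)))) (n - 1).
Proof.
  set (rhs := / INR n * sum_f_R0 (fun l => cos (x * cos (theta n l))) (n - 1)).
  split.
  - apply (ex_series_geom_bound _ (exp (x²)) (/ 2)); [lra|]; intros i.
    rewrite Rabs_mult, pow_1_abs, Rmult_1_l.
    replace (exp (x²) * (/ 2) ^ i) with (2 * exp (x²) * (/ 2) ^ S i) by (simpl; field).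
    apply besselJ_4in_bound, hn.
  - exists (/ 2 * (rhs - besselJ 0 x)); split; [|unfold rhs, theta; field; apply not_0_INR; lia].
    apply (is_series_ext (fun i => / 2 * (2 * (-1) ^ S i * besselJ (4 * S i * n) x)));
      [intros i; change (/ 2 * (2 * (-1) ^ S i * besselJ (4 * S i * n) x) =
                          (-1) ^ S i * besselJ (4 * S i * n) x); field|].
    apply (is_series_scal_l (/ 2) _ (rhs - besselJ 0 x)).
    apply (is_series_incr_1 (fun i => 2 * (-1) ^ i * besselJ (4 * i * n) x)).
    match goal with |- is_series _ ?l => replace l with (besselJ 0 x + rhs) end.
    + apply is_series_besselJ_theta, hn.
    + rewrite Nat.mul_0_r.
      change (besselJ 0 x + rhs = rhs - besselJ 0 x + 2 * 1 * besselJ 0 x); ring.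
Qed.
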